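(* Let $X$ be a locally connected compact metrizable group with an invariant metric $\delta$, let $T$ be a minimal rotation of $X$, let $G$ be a locally compact second countable group, $f\colon X\to G$ continuous, $H$ a closed subgroup of $G$, and let $y\mapsto H_y$ be a consistent selection of subgroups in the essential ranges of $f$. Let $U$ be a relatively compact open neighbourhood of $\mathbf 1_G$ such that $E_z(f)\cap(\bar U H_z\setminus UH_z)=\varnothing$ for some $z\in X$. Then there exists $\varepsilon>0$ such that for all $y\in X$ and $n\in\mathbb Z$ with $\delta(y,z)<\varepsilon$ and $\delta(T^ny,z)<\varepsilon$, either $f(n,y)H_y\cap UH_y\neq\varnothing$ or $f(n,y)H_y\cap\bar UH_y=\varnothing$. Furthermore, for every $y\in X$ and every $g\in E_y(f)$ we have $gH_y\subseteq E_y(f)$.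
   Context: The cocycle is $f(n,x)=f(T^{n-1}x)\cdots f(x)$ for $n\ge1$, $f(0,x)=\mathbf 1_G$, $f(n,x)=f(-n,T^nx)^{-1}$ for $n<0$. $E_x(f)$ is the set of $g\in G$ such that for every open neighbourhood $U$ of $g$ and every open neighbourhood $\mathcal O$ of $x$ there is $n\neq0$ with $T^{-n}\mathcal O\cap\mathcal O\cap\{y:f(n,y)\in U\}\neq\varnothing$. $H^G=\{gHg^{-1}:g\in G\}$, topologised via the bijection with $G/N(H)$, $N(H)=\{g:gHg^{-1}=H\}$. A consistent selection of subgroups in the essential ranges of $f$ is a continuous map $y\mapsto H_y$ from $X$ into $H^G$ such that $H_x\subseteq E_x(f)$ and $H_{T^nx}=f(n,x)H_xf(n,x)^{-1}$ for all $x\in X$, $n\in\mathbb Z$. *)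

From HB Require Import structures.
From mathcomp Require Import all_boot all_order all_algebra.
From mathcomp Require Import all_classical all_reals topology.
Set Implicit Arguments. Unset Strict Implicit. Unset Printing Implicit Defensive.
Import Order.TTheory GRing.Theory Num.Theory.
Local Open Scope classical_set_scope.
Local Open Scope ring_scope.

Record is_group (T : Type) (mul : T -> T -> T) (inv : T -> T) (one : T) : Prop := {
  grp_assoc : forall x y z, mul x (mul y z) = mul (mul x y) z;
  grp_mul1l : forall x, mul one x = x;
  grp_mul1r : forall x, mul x one = x;
  grp_mulVl : forall x, mul (inv x) x = one;
  grp_mulVr : forall x, mul x (inv x) = one }.

Record is_topgroup (T : topologicalType) (mul : T -> T -> T) (inv : T -> T) (one : T)
  : Prop := {
  tg_group : is_group mul inv one;
  tg_mul_cont : continuous (fun p : T * T => mul p.1 p.2);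
  tg_inv_cont : continuous inv }.

Definition locally_connected (T : topologicalType) : Prop :=
  forall (x : T) (V : set T), nbhs x V ->
    exists W : set T, [/\ open W, W x, connected W & W `<=` V].

Definition is_metric (R : realType) (T : Type) (d : T -> T -> R) : Prop :=
  [/\ forall x y, 0 <= d x y,
      forall x y, d x y = 0 <-> x = y,
      forall x y, d x y = d y x &
      forall x y z, d x z <= d x y + d y z].

Definition metric_compatible (R : realType) (T : topologicalType) (d : T -> T -> R)
  : Prop :=
  forall A : set T, open A <->
    (forall x, A x -> exists2 e : R, 0 < e & forall y, d x y < e -> A y).

Definition invariant_metric (R : realType) (T : Type) (mul : T -> T -> T)
  (d : T -> T -> R) : Prop :=
  forall g x y, d (mul g x) (mul g y) = d x y /\ d (mul x g) (mul y g) = d x y.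

Definition iterz (X : Type) (T Tinv : X -> X) (n : int) (x : X) : X :=
  match n with
  | Posz k => iter k T x
  | Negz k => iter k.+1 Tinv x
  end.

Definition minimal_map (X : topologicalType) (T : X -> X) : Prop :=
  forall A : set X, closed A -> A !=set0 -> (forall x, A x <-> A (T x)) -> A = setT.

Section Cocycle.
Variables (X G : Type) (mulG : G -> G -> G) (invG : G -> G) (oneG : G)
  (T Tinv : X -> X) (f : X -> G).

Fixpoint cocn (k : nat) (x : X) : G :=
  match k with
  | 0%N => oneG
  | k'.+1 => mulG (f (iter k' T x)) (cocn k' x)
  end.

(* f(n,x) for n : int; f(n,x) = f(-n, T^n x)^{-1} for n < 0 *)
Definition cocycle (n : int) (x : X) : G :=
  match n with
  | Posz k => cocn k x
  | Negz k => invG (cocn k.+1 (iterz T Tinv (Negz k) x))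
  end.

End Cocycle.

Definition ess_range (X G : topologicalType) (mulG : G -> G -> G) (invG : G -> G)
  (oneG : G) (T Tinv : X -> X) (f : X -> G) (x : X) : set G :=
  [set g | forall (V : set G) (O : set X),
     open V -> V g -> open O -> O x ->
     exists n : int, n != 0 /\
       exists y, [/\ O y, O (iterz T Tinv n y) & V (cocycle mulG invG oneG T Tinv f n y)]].

Definition setmul (G : Type) (mulG : G -> G -> G) (A B : set G) : set G :=
  [set z | exists a b, [/\ A a, B b & z = mulG a b]].

Definition conjset (G : Type) (mulG : G -> G -> G) (invG : G -> G) (g : G)
  (H : set G) : set G :=
  [set z | exists h, H h /\ z = mulG (mulG g h) (invG g)].

Definition normaliser (G : Type) (mulG : G -> G -> G) (invG : G -> G) (H : set G)
  : set G := [set k | conjset mulG invG k H = H].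

Definition closed_subgroup (G : topologicalType) (mulG : G -> G -> G) (invG : G -> G)
  (oneG : G) (H : set G) : Prop :=
  [/\ closed H, H oneG, forall x y, H x -> H y -> H (mulG x y) &
      forall x, H x -> H (invG x)].

(* A map y |-> Hs y from X into H^G = {gHg^-1}, continuous for the topology of
   H^G transported from G/N(H) (quotient topology): the preimage of every open set
   of G/N(H) is open; open sets of G/N(H) correspond to the open subsets O of G
   saturated under right multiplication by N(H). *)
Definition conj_class_map (X G : topologicalType) (mulG : G -> G -> G)
  (invG : G -> G) (H : set G) (Hs : X -> set G) : Prop :=
  (forall y, exists g, Hs y = conjset mulG invG g H) /\
  (forall O : set G, open O ->
     (forall g k, O g -> normaliser mulG invG H k -> O (mulG g k)) ->
     open [set y | exists g, O g /\ Hs y = conjset mulG invG g H]).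

Definition consistent_selection (X G : topologicalType) (mulG : G -> G -> G)
  (invG : G -> G) (oneG : G) (T Tinv : X -> X) (f : X -> G) (H : set G)
  (Hs : X -> set G) : Prop :=
  [/\ conj_class_map mulG invG H Hs,
      forall x, Hs x `<=` ess_range mulG invG oneG T Tinv f x &
      forall x (n : int), Hs (iterz T Tinv n x) =
        conjset mulG invG (cocycle mulG invG oneG T Tinv f n x) (Hs x)].

(* Continuity of y |-> H_y for the topology of G/N(H) means that near z every
   H_y contains conjugates w h w^-1, with w close to 1, of each h in H_z. Returns
   then compose: if f(n,y) is close to g and h is in H_y, which lies in E_y(f), a
   return of h from near y followed by the return f(n,y) is, by the cocycle identity
   f(n+k,y') = f(n,T^k y') f(k,y'), a return close to gh; so gH_y lies in E_y(f).
   If no eps works, there are returns y_m -> z, T^(n_m) y_m -> z and points u_m of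
   f(n_m,y_m)H_(y_m) in the closure of U but outside U H_(y_m). A cluster point u of
   (u_m) lies in the closure of U and, by the same composition, in E_z(f); the
   hypothesis on z puts u in U H_z, and then the conjugates above put some u_m in
   U H_(y_m), a contradiction. *)

From mathcomp Require Import all_boot all_order all_algebra.
From mathcomp Require Import interval_inference all_classical all_reals topology normedtype.
From mathcomp Require Import zify.
Import Order.TTheory GRing.Theory Num.Theory.
Local Open Scope classical_set_scope.
Local Open Scope ring_scope.

Definition subgroup_set {T : Type} (mul : T -> T -> T) (inv : T -> T) (one : T)
    (S : set T) : Prop :=
  [/\ S one, forall x y, S x -> S y -> S (mul x y) & forall x, S x -> S (inv x)].

Section GroupLaws.
Context {T : Type} {mul : T -> T -> T} {inv : T -> T} {one : T}.
Hypothesis hg : is_group mul inv one.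

Lemma grp_mulK x y : mul (inv x) (mul x y) = y.
Proof. by rewrite (grp_assoc hg) (grp_mulVl hg) (grp_mul1l hg). Qed.

Lemma grp_mulKr x y : mul (mul y x) (inv x) = y.
Proof. by rewrite -(grp_assoc hg) (grp_mulVr hg) (grp_mul1r hg). Qed.

Lemma grp_mulKVr x y : mul (mul y (inv x)) x = y.
Proof. by rewrite -(grp_assoc hg) (grp_mulVl hg) (grp_mul1r hg). Qed.

Lemma grp_inv_uniq x y : mul x y = one -> inv x = y.
Proof. by move=> xy1; rewrite -(grp_mul1r hg (inv x)) -xy1 grp_mulK. Qed.

Lemma grp_invM x y : inv (mul x y) = mul (inv y) (inv x).
Proof.
apply: grp_inv_uniq.
by rewrite -(grp_assoc hg) (grp_assoc hg y) (grp_mulVr hg) (grp_mul1l hg) (grp_mulVr hg).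
Qed.

Lemma grp_inv1 : inv one = one.
Proof. by apply: grp_inv_uniq; rewrite (grp_mul1l hg). Qed.

Lemma grp_invK x : inv (inv x) = x.
Proof. by apply: grp_inv_uniq; rewrite (grp_mulVl hg). Qed.

Lemma conjsetM a b S :
  conjset mul inv (mul a b) S = conjset mul inv a (conjset mul inv b S).
Proof.
apply/seteqP; split=> x /=.
  case=> h [Sh ->]; exists (mul (mul b h) (inv b)); split; first by exists h.
  by rewrite grp_invM !(grp_assoc hg).
case=> t [[h [Sh ->]] ->]; exists h; split => //.
by rewrite grp_invM !(grp_assoc hg).
Qed.

Lemma conjset1 S : conjset mul inv one S = S.
Proof.
apply/seteqP; split=> x /=.
  by case=> h [Sh ->]; rewrite grp_inv1 (grp_mul1r hg) (grp_mul1l hg).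
by move=> Sx; exists x; rewrite grp_inv1 (grp_mul1r hg) (grp_mul1l hg).
Qed.

Lemma conjset_subgroup a S :
  subgroup_set mul inv one S -> subgroup_set mul inv one (conjset mul inv a S).
Proof.
case=> S1 SM SV; split.
- by exists one; rewrite (grp_mul1r hg) (grp_mulVr hg).
- move=> x y [h [Sh ->]] [k [Sk ->]]; exists (mul h k); split; first exact: SM.
  by rewrite -!(grp_assoc hg) grp_mulK.
- move=> x [h [Sh ->]]; exists (inv h); split; first exact: SV.
  by rewrite !grp_invM grp_invK (grp_assoc hg).
Qed.

Lemma setmul_subgroupMr {A S : set T} {x s : T} :
  subgroup_set mul inv one S -> setmul mul A S x -> S s -> setmul mul A S (mul x s).
Proof.
case=> _ SM _ [a [t [Aa St ->]]] Ss; exists a, (mul t s); split => //.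
  exact: SM.
by rewrite (grp_assoc hg).
Qed.

End GroupLaws.

Lemma int_ind_succ_pred (P : int -> Prop) :
  P 0 -> (forall n, P n -> P (n + 1)) -> (forall n, P n -> P (n - 1)) ->
  forall n, P n.
Proof.
move=> P0 PS PP; elim/int_rec => // k Pk.
  have -> : Posz k.+1 = Posz k + 1 by lia.
  exact: PS.
have -> : - Posz k.+1 = - Posz k - 1 by lia.
exact: PP.
Qed.

Section Cocycle.
Context {X G : Type} {mul : G -> G -> G} {inv : G -> G} {one : G}
  {T Tinv : X -> X} {f : X -> G}.
Hypotheses (hg : is_group mul inv one) (TK : cancel T Tinv) (TKV : cancel Tinv T).

Local Notation itz := (iterz T Tinv).
Local Notation coc := (cocycle mul inv one T Tinv f).
Local Notation cocf := (cocn mul one T f).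

Lemma iterzS n x : itz (n + 1) x = T (itz n x).
Proof.
case: n => [k|[|k]].
- by have -> : Posz k + 1 = Posz k.+1 by lia.
- by have -> : Negz 0 + 1 = 0 by lia.
- have -> : Negz k.+1 + 1 = Negz k by lia.
  by rewrite /= TKV.
Qed.

Lemma iterzB1 n x : itz (n - 1) x = Tinv (itz n x).
Proof. by rewrite -{2}(subrK 1 n) iterzS TK. Qed.

Lemma iterzD n m x : itz (n + m) x = itz n (itz m x).
Proof.
elim/int_ind_succ_pred: n => [|n IH|n IH]; first by rewrite add0r.
- by rewrite (addrAC n 1 m) !iterzS IH.
- by rewrite (addrAC n (-1) m) !iterzB1 IH.
Qed.

Lemma cocnSr k x : cocf k.+1 x = mul (cocf k (T x)) (f x).
Proof.
elim: k x => [|k IH] x; first by rewrite /= (grp_mul1r hg) (grp_mul1l hg).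
by rewrite -[cocf k.+2 x]/(mul (f (iter k.+1 T x)) (cocf k.+1 x)) IH
  (grp_assoc hg) iterSr.
Qed.

Lemma cocycleS n x : coc (n + 1) x = mul (f (itz n x)) (coc n x).
Proof.
case: n => [k|[|k]].
- by have -> : Posz k + 1 = Posz k.+1 by lia.
- have -> : Negz 0 + 1 = 0 by lia.
  by rewrite /= (grp_mul1r hg) (grp_mulVr hg).
- have -> : Negz k.+1 + 1 = Negz k by lia.
  rewrite /cocycle /iterz [cocf k.+2 _]cocnSr (grp_invM hg) (grp_assoc hg).
  by rewrite (grp_mulVr hg) (grp_mul1l hg) iterSr /= TKV -iterSr.
Qed.

Lemma cocycleB1 n x : coc (n - 1) x = mul (inv (f (itz (n - 1) x))) (coc n x).
Proof. by rewrite -{3}(subrK 1 n) cocycleS (grp_mulK hg). Qed.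

Lemma cocycleD n m x : coc (n + m) x = mul (coc n (itz m x)) (coc m x).
Proof.
elim/int_ind_succ_pred: n => [|n IH|n IH].
- by rewrite add0r /= (grp_mul1l hg).
- by rewrite (addrAC n 1 m) !cocycleS IH (grp_assoc hg) iterzD.
- rewrite (addrAC n (-1) m) !cocycleB1 IH (grp_assoc hg).
  by rewrite -[itz (n - 1) (itz m x)]iterzD (addrAC n (-1) m).
Qed.

End Cocycle.

Section TopologicalGroup.
Context {G : topologicalType} {mul : G -> G -> G} {inv : G -> G} {one : G}.
Hypothesis htg : is_topgroup mul inv one.

Lemma open_mul_split {a b : G} {V : set G} : open V -> V (mul a b) ->
  exists V1 V2, [/\ open V1, V1 a, open V2, V2 b &
    forall x y, V1 x -> V2 y -> V (mul x y)].
Proof.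
move=> oV Vab.
have [[A B] /= [nA nB] AB_V] :=
  tg_mul_cont htg (x := (a, b)) (open_nbhs_nbhs (conj oV Vab)).
move: nA nB; rewrite !nbhsE => -[A' [oA' A'a] A'A] [B' [oB' B'b] B'B].
exists A', B'; split => // x y A'x B'y.
by apply: (AB_V (x, y)); split; [apply: A'A | apply: B'B].
Qed.

Lemma continuous_mul {S : topologicalType} (p q : S -> G) :
  continuous p -> continuous q -> continuous (fun x => mul (p x) (q x)).
Proof.
move=> cp cq x.
apply: (@continuous_comp _ _ _ (fun x => (p x, q x)) (fun p => mul p.1 p.2)).
  exact: (cvg_pair (cp x) (cq x)).
exact: (tg_mul_cont htg (x := (p x, q x))).
Qed.

Lemma continuous_lmul a : continuous (mul a).
Proof.
by apply: (continuous_mul (fun=> a) id) => x; [exact: cst_continuous | exact: cvg_id].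
Qed.

Lemma continuous_rmul a : continuous (mul^~ a).
Proof.
by apply: (continuous_mul id (fun=> a)) => x; [exact: cvg_id | exact: cst_continuous].
Qed.

Lemma continuous_conj h : continuous (fun w => mul (mul w h) (inv w)).
Proof.
apply: continuous_mul; last exact: tg_inv_cont htg.
exact: continuous_rmul.
Qed.

End TopologicalGroup.

Lemma continuous_iter {S : topologicalType} (h : S -> S) k :
  continuous h -> continuous (iter k h).
Proof.
move=> ch; elim: k => [|k IH] x /=; first exact: cvg_id.
exact: (continuous_comp (IH x) (ch _)).
Qed.

Section CocycleContinuity.
Context {X G : topologicalType} {mul : G -> G -> G} {inv : G -> G} {one : G}
  {T Tinv : X -> X} {f : X -> G}.
Hypotheses (htg : is_topgroup mul inv one) (cT : continuous T)
  (cTi : continuous Tinv) (cf : continuous f).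

Lemma continuous_iterz n : continuous (iterz T Tinv n).
Proof. by case: n => k; apply: continuous_iter. Qed.

Lemma continuous_cocn k : continuous (cocn mul one T f k).
Proof.
elim: k => [|k IH]; first exact: cst_continuous.
apply: (continuous_mul htg (fun x => f (iter k T x)) _ _ IH) => x.
by apply: continuous_comp; [exact: continuous_iter | exact: cf].
Qed.

Lemma continuous_cocycle n : continuous (cocycle mul inv one T Tinv f n).
Proof.
case: n => k /= x; first exact: continuous_cocn.
apply: (@continuous_comp _ _ _ (cocn mul one T f k.+1 \o iter k.+1 Tinv) inv).
  by apply: continuous_comp; [exact: continuous_iter | exact: continuous_cocn].
exact: (tg_inv_cont htg (x := _)).
Qed.

End CocycleContinuity.

Section ConjugacyClassMap.
Context {X G : topologicalType} {mul : G -> G -> G} {inv : G -> G} {one : G}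
  {H : set G} {Hs : X -> set G}.
Hypotheses (htg : is_topgroup mul inv one) (hHs : conj_class_map mul inv H Hs).

Let hg := tg_group htg.

Lemma conj_class_map_near z (W : set G) : open W -> W one ->
  exists P : set X, [/\ open P, P z & forall y, P y -> forall h, Hs z h ->
    exists2 w, W w & Hs y (mul (mul w h) (inv w))].
Proof.
move=> oW W1; case: hHs => hc hopen; have [c Hz] := hc z.
pose N := normaliser mul inv H.
(* [O = W c N(H)] is open and [N(H)]-saturated: a neighbourhood of [H_z = c H c^-1]
   in [G/N(H)]. *)
pose O := [set g | exists w k, [/\ W w, N k & g = mul (mul w c) k]].
have oO : open O.
  rewrite openE => _ [w [k [Ww Nk ->]]].
  apply: (@filterS _ _ _ [set x | W (mul x (inv (mul c k)))]).
    move=> x Wx; exists (mul x (inv (mul c k))), k; split => //.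
    by rewrite -(grp_assoc hg _ c k) (grp_mulKVr hg).
  apply: open_nbhs_nbhs; split; last by rewrite /= -(grp_assoc hg w c k) (grp_mulKr hg).
  by move/continuousP: (continuous_rmul htg (inv (mul c k))) => /(_ _ oW).
have O_sat g k : O g -> N k -> O (mul g k).
  case=> w [k' [Ww Nk' ->]] Nk; exists w, (mul k' k); split => //.
    by rewrite /N /normaliser /= (conjsetM hg) Nk Nk'.
  by rewrite (grp_assoc hg).
exists [set y | exists g, O g /\ Hs y = conjset mul inv g H]; split.
- exact: hopen.
- exists c; split => //; exists one, one; split => //.
    by rewrite /N /normaliser /= (conjset1 hg).
  by rewrite (grp_mul1l hg) (grp_mul1r hg).
- move=> y [_ [[w [k [Ww Nk ->]]] ->]] h; rewrite Hz => -[h0 [Hh0 ->]].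
  have : conjset mul inv k H h0 by rewrite Nk.
  case=> x [Hx ->]; exists w => //; exists x; split => //.
  by rewrite !(grp_invM hg) !(grp_assoc hg).
Qed.

Lemma conj_class_map_meets {z h} {V : set G} : Hs z h -> open V -> V h ->
  exists P : set X, [/\ open P, P z & forall y, P y -> exists2 k, Hs y k & V k].
Proof.
move=> Hh oV Vh.
have [||P [oP Pz PHs]] := conj_class_map_near z [set w | V (mul (mul w h) (inv w))].
- by move/continuousP: (continuous_conj htg h) => /(_ _ oV).
- by rewrite /= (grp_inv1 hg) (grp_mul1r hg) (grp_mul1l hg).
exists P; split => // y /PHs /(_ h Hh) [w Vw Hw].
by exists (mul (mul w h) (inv w)).
Qed.

End ConjugacyClassMap.

Lemma metric_compatible_cvg {R : realType} {X : topologicalType} {d : X -> X -> R}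
    {u : nat -> X} {z : X} :
  metric_compatible d -> (forall m, d z (u m) < m.+1%:R^-1) -> u @ \oo --> z.
Proof.
move=> hd du A; rewrite nbhsE => -[B [oB Bz] BA].
have [r r0 Br] := (hd B).1 oB z Bz.
apply: filterS (near_infty_natSinv_lt (PosNum r0)) => m mr.
by apply/BA/Br; exact: lt_trans (du m) mr.
Qed.

Lemma cluster_seq_visits {S : topologicalType} {u : nat -> S} {p : S}
    {P : nat -> Prop} {V : set S} :
  cluster (u @ \oo) p -> (\forall m \near \oo, P m) -> nbhs p V ->
  exists m, P m /\ V (u m).
Proof.
move=> up evP pV; have [|_ [[m Pm <-] Vum]] := up (u @` P) V _ pV.
  by apply: filterS evP => m Pm; exists m.
by exists m.
Qed.

Section ConsistentSelection.
Context {X G : topologicalType} {mul : G -> G -> G} {inv : G -> G} {one : G}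
  {T Tinv : X -> X} {f : X -> G} {H : set G} {Hs : X -> set G}.
Hypotheses (htg : is_topgroup mul inv one) (cT : continuous T)
  (cTi : continuous Tinv) (cf : continuous f) (TK : cancel T Tinv)
  (TKV : cancel Tinv T) (hH : closed_subgroup mul inv one H)
  (hsel : consistent_selection mul inv one T Tinv f H Hs).

Let hg := tg_group htg.
Let hHs : conj_class_map mul inv H Hs. Proof. by case: hsel. Qed.

Local Notation itz := (iterz T Tinv).
Local Notation coc := (cocycle mul inv one T Tinv f).
Local Notation E := (ess_range mul inv one T Tinv f).

(* [ess_range ... x g] unfolds to: [cocycle_returns V O] for all open [V] containing
   [g] and [O] containing [x]. *)
Definition cocycle_returns (V : set G) (O : set X) : Prop :=
  exists n : int, n != 0 /\ exists y, [/\ O y, O (itz n y) & V (coc n y)].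

Lemma selection_subgroup y : subgroup_set mul inv one (Hs y).
Proof.
case: hHs => hc _; have [g ->] := hc y.
by case: hH => _ H1 HM HV; apply: (conjset_subgroup hg).
Qed.

Lemma selection_sub_ess_range y : Hs y `<=` E y.
Proof. by case: hsel. Qed.

Lemma ess_range1 y : E y one.
Proof. by apply: selection_sub_ess_range; case: (selection_subgroup y). Qed.

(* A return of [e] from a point [y'] that still returns like [y] composes with the
   latter by [cocycleD]; if the total time [n + k] vanishes, then [V] contains [one],
   which is itself in the essential range. *)
Lemma cocycle_returns_mul {y n e} {V1 V2 V : set G} {O : set X} :
  open V1 -> open V2 -> open V -> open O ->
  (forall a b, V1 a -> V2 b -> V (mul a b)) ->
  O y -> O (itz n y) -> V1 (coc n y) -> E y e -> V2 e -> cocycle_returns V O.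
Proof.
move=> oV1 oV2 oV oO V12 Oy Ony V1c Ee V2e.
pose A := O `&` (itz n @^-1` O `&` coc n @^-1` V1).
have oA : open A.
  apply: (openI oO); apply: openI.
    by move/continuousP: (continuous_iterz cT cTi n) => /(_ _ oO).
  by move/continuousP: (continuous_cocycle htg cT cTi cf n) => /(_ _ oV1).
have [k [_ [y' [[Oy' _] [_ [Onky' V1nky']] V2ky']]]] :=
  Ee V2 A oV2 V2e oA (conj Oy (conj Ony V1c)).
have Vnk : V (coc (n + k) y') by rewrite (cocycleD hg TK TKV); apply: V12.
have [nk0|nk0] := eqVneq (n + k) 0.
  by rewrite nk0 in Vnk; exact: (ess_range1 y' V O oV Vnk oO Oy').
by exists (n + k); split => //; exists y'; rewrite (iterzD TK TKV).
Qed.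

Lemma ess_range_mul_selection {y g h} : E y g -> Hs y h -> E y (mul g h).
Proof.
move=> Eg Hh V O oV Vgh oO Oy.
have [V1 [V2 [oV1 V1g oV2 V2h V12]]] := open_mul_split htg oV Vgh.
have [P [oP Py PHs]] := conj_class_map_meets htg hHs Hh oV2 V2h.
have [n [_ [y1 [[Oy1 Py1] [Ony1 _] V1c]]]] :=
  Eg V1 (O `&` P) oV1 V1g (openI oO oP) (conj Oy Py).
have [e He V2e] := PHs y1 Py1.
exact: (cocycle_returns_mul oV1 oV2 oV oO V12 Oy1 Ony1 V1c
  (selection_sub_ess_range _ _ He) V2e).
Qed.

Section ReturnSequence.
Context {z : X} {ys : nat -> X} {ns : nat -> int} {us : nat -> G}.
Hypotheses (ys_cvg : ys @ \oo --> z)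
  (itz_cvg : (fun m => itz (ns m) (ys m)) @ \oo --> z).

Lemma cluster_ess_range {u} :
  (forall m, exists2 e, Hs (ys m) e & us m = mul (coc (ns m) (ys m)) e) ->
  cluster (us @ \oo) u -> E z u.
Proof.
move=> us_coset clu V O oV Vu oO Oz.
have Oz' : nbhs z O by exact: open_nbhs_nbhs.
have ev : \forall m \near \oo, O (ys m) /\ O (itz (ns m) (ys m)).
  by near=> m; split; near: m; [exact: ys_cvg _ Oz' | exact: itz_cvg _ Oz'].
have [m [[Oym Onym] Vum]] :=
  cluster_seq_visits clu ev (open_nbhs_nbhs (conj oV Vu)).
have [e He um] := us_coset m; rewrite um in Vum.
have [V1 [V2 [oV1 V1c oV2 V2e V12]]] := open_mul_split htg oV Vum.
exact: (cocycle_returns_mul oV1 oV2 oV oO V12 Oym Onym V1c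
  (selection_sub_ess_range _ _ He) V2e).
Unshelve. all: by end_near.
Qed.

Lemma cluster_selection_coset {U : set G} {u} : open U ->
  cluster (us @ \oo) u -> setmul mul U (Hs z) u ->
  exists m, setmul mul U (Hs (ys m)) (us m).
Proof.
move=> oU clu [v [h [Uv Hh uvh]]]; subst u.
have Uvh : U (mul (mul v h) (inv h)) by rewrite (grp_mulKr hg).
have [V1 [V2 [oV1 V1u oV2 V2h' V12]]] := open_mul_split htg oU Uvh.
have Hh' : Hs z (inv h) by case: (selection_subgroup z) => _ _; apply.
have [P [oP Pz PHs]] := conj_class_map_meets htg hHs Hh' oV2 V2h'.
have [m [Pym V1um]] := cluster_seq_visits clu
  (ys_cvg _ (open_nbhs_nbhs (conj oP Pz))) (open_nbhs_nbhs (conj oV1 V1u)).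
have [k Hk V2k] := PHs _ Pym.
exists m, (mul (us m) k), (inv k); split.
- exact: V12.
- by case: (selection_subgroup (ys m)) => _ _; apply.
- by rewrite (grp_mulKr hg).
Qed.

End ReturnSequence.

Section CosetDichotomy.
Variables (R : realType) (delta : X -> X -> R) (U : set G) (z : X).
Hypotheses (delta_sym : forall x y, delta x y = delta y x)
  (hcomp : metric_compatible delta) (oU : open U) (cU : compact (closure U))
  (hz : E z `&` (setmul mul (closure U) (Hs z) `\` setmul mul U (Hs z)) = set0).

Definition coset_dichotomy (eps : R) : Prop :=
  forall y n, delta y z < eps -> delta (itz n y) z < eps ->
    setmul mul [set coc n y] (Hs y) `&` setmul mul U (Hs y) !=set0 \/
    setmul mul [set coc n y] (Hs y) `&` setmul mul (closure U) (Hs y) = set0.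

Definition bad_return (m : nat) (y : X) (n : int) (u : G) : Prop :=
  [/\ delta y z < m.+1%:R^-1, delta (itz n y) z < m.+1%:R^-1, closure U u,
      exists2 e, Hs y e & u = mul (coc n y) e
    & ~ setmul mul U (Hs y) u].

Lemma bad_return_exists m : ~ (exists2 eps, 0 < eps & coset_dichotomy eps) ->
  exists p : X * int * G, bad_return m p.1.1 p.1.2 p.2.
Proof.
move=> no_eps; apply: contrapT => no_bad; apply: no_eps.
exists m.+1%:R^-1; first by rewrite invr_gt0 ltr0n.
move=> y n dy dny.
have [meet|disj] :=
  pselect (setmul mul [set coc n y] (Hs y) `&` setmul mul U (Hs y) !=set0).
  by left.
right; apply/seteqP; split=> [_ [[_ [h1 [-> Hh1 ->]]] [u [h2 [Uu Hh2 e]]]]|//].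
have [_ HM HV] := selection_subgroup y.
apply: no_bad; exists (y, n, u); split => //=.
- exists (mul h1 (inv h2)); first by apply: HM => //; apply: HV.
  by rewrite (grp_assoc hg) e (grp_mulKr hg).
- move=> UHu; apply: disj; exists (mul u h2); split.
    by exists (coc n y), h1; rewrite e.
  exact: (setmul_subgroupMr hg (selection_subgroup y) UHu Hh2).
Qed.

Lemma coset_dichotomy_near : exists2 eps, 0 < eps & coset_dichotomy eps.
Proof.
apply: contrapT => no_eps.
have [F bad] := choice (fun m => bad_return_exists m no_eps).
pose ys m := (F m).1.1; pose ns m := (F m).1.2; pose us m := (F m).2.
have ys_cvg : ys @ \oo --> z.
  by apply: (metric_compatible_cvg hcomp) => m; rewrite delta_sym; case: (bad m).
have itz_cvg : (fun m => itz (ns m) (ys m)) @ \oo --> z.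
  by apply: (metric_compatible_cvg hcomp) => m; rewrite delta_sym; case: (bad m).
have [u [Uu clu]] : closure U `&` cluster (us @ \oo) !=set0.
  by apply: (cU (us @ \oo)); exists 0%N => // m _; case: (bad m).
have Eu : E z u.
  by apply: (cluster_ess_range ys_cvg itz_cvg) clu => m; case: (bad m).
have [m UHm] : exists m, setmul mul U (Hs (ys m)) (us m).
  apply: (cluster_selection_coset ys_cvg oU clu); apply: contrapT => notUHu.
  suff : (E z `&` (setmul mul (closure U) (Hs z) `\` setmul mul U (Hs z))) u.
    by rewrite hz.
  split => //; split => //; exists u, one; split => //.
    by case: (selection_subgroup z).
  by rewrite (grp_mul1r hg).
by case: (bad m) => _ _ _ _ /(_ UHm).
Qed.

End CosetDichotomy.

End ConsistentSelection.

Theorem lemma4p1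
  (R : realType)
  (X : topologicalType) (mulX : X -> X -> X) (invX : X -> X) (oneX : X)
  (delta : X -> X -> R)
  (a : X) (T Tinv : X -> X)
  (G : topologicalType) (mulG : G -> G -> G) (invG : G -> G) (oneG : G)
  (f : X -> G) (H : set G) (Hs : X -> set G) (U : set G) (z : X) :
  (* X: locally connected compact metrizable group, delta an invariant metric *)
  is_topgroup mulX invX oneX -> hausdorff_space X -> compact [set: X] ->
  locally_connected X ->
  is_metric delta -> metric_compatible delta -> invariant_metric mulX delta ->
  (* T: minimal rotation of X, Tinv its inverse *)
  (forall x, T x = mulX a x) -> cancel T Tinv -> cancel Tinv T ->
  minimal_map T ->
  (* G: locally compact second countable group *)
  is_topgroup mulG invG oneG -> hausdorff_space G -> locally_compact [set: G] ->
  @second_countable G ->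
  continuous f ->
  closed_subgroup mulG invG oneG H ->
  consistent_selection mulG invG oneG T Tinv f H Hs ->
  (* U: relatively compact open neighbourhood of 1_G *)
  open U -> U oneG -> compact (closure U) ->
  ess_range mulG invG oneG T Tinv f z
    `&` (setmul mulG (closure U) (Hs z) `\` setmul mulG U (Hs z)) = set0 ->
  (exists2 eps : R, 0 < eps &
     forall (y : X) (n : int), delta y z < eps -> delta (iterz T Tinv n y) z < eps ->
       setmul mulG [set cocycle mulG invG oneG T Tinv f n y] (Hs y)
         `&` setmul mulG U (Hs y) !=set0 \/
       setmul mulG [set cocycle mulG invG oneG T Tinv f n y] (Hs y)
         `&` setmul mulG (closure U) (Hs y) = set0)
  /\
  (forall (y : X) (g : G), ess_range mulG invG oneG T Tinv f y g ->
     setmul mulG [set g] (Hs y) `<=` ess_range mulG invG oneG T Tinv f y).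
Proof.
move=> htgX _ _ _ [_ _ delta_sym _] hcomp _ Ta TK TKV _ htg _ _ _ cf hH hsel
  oU _ cU hz.
have eT : T = mulX a by apply: funext.
have eTinv : Tinv = mulX (invX a).
  by apply: funext => x; rewrite -{2}(TKV x) Ta (grp_mulK (tg_group htgX)).
have cT : continuous T by rewrite eT; exact: (continuous_lmul htgX).
have cTinv : continuous Tinv by rewrite eTinv; exact: (continuous_lmul htgX).
split.
  exact: (coset_dichotomy_near htg cT cTinv cf TK TKV hH hsel _ _ _ _ delta_sym hcomp
    oU cU hz).
move=> y g Eg _ [_ [h [-> Hh ->]]].
exact: (ess_range_mul_selection htg cT cTinv cf TK TKV hH hsel Eg Hh).
Qed.
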